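(* Let $(A,\cdot,\alpha)$ be a Hom-Malcev algebra over a field $\mathbb{K}$ of characteristic $0$, and define for $w,x,y,z\in A$ $$G(w,x,y,z)=J_{\alpha}(w\cdot x,\alpha(y),\alpha(z))-\alpha^{2}(x)\cdot J_{\alpha}(w,y,z)-J_{\alpha}(x,y,z)\cdot\alpha^{2}(w).$$ Then for all $w,x,y,z\in A$, $$G(w,x,y,z)=2\big[J_{\alpha}(w\cdot x,\alpha(y),\alpha(z))+J_{\alpha}(y\cdot z,\alpha(w),\alpha(x))\big].$$
   Context: A multiplicative Hom-algebra is a triple $(A,\cdot,\alpha)$ with $A$ a vector space over $\mathbb{K}$, $\cdot$ bilinear, and $\alpha$ linear with $\alpha(x\cdot y)=\alpha(x)\cdot\alpha(y)$; anticommutative means $x\cdot y=-y\cdot x$. The Hom-Jacobian is $J_{\alpha}(x,y,z)=(x\cdot y)\cdot\alpha(z)+(y\cdot z)\cdot\alpha(x)+(z\cdot x)\cdot\alpha(y)$. A Hom-Malcev algebra is an anticommutative multiplicative Hom-algebra satisfying $J_{\alpha}(\alpha(x),\alpha(y),x\cdot z)=J_{\alpha}(x,y,z)\cdot\alpha^{2}(x)$ for all $x,y,z\in A$. *)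

From mathcomp Require Import all_boot all_algebra.
Set Implicit Arguments. Unset Strict Implicit. Unset Printing Implicit Defensive.
Import GRing.Theory.
Local Open Scope ring_scope.

Definition bilinear_mul (F : fieldType) (A : lmodType F) (mul : A -> A -> A) :=
  (forall a x y z, mul (a *: x + y) z = a *: mul x z + mul y z) /\
  (forall a x y z, mul x (a *: y + z) = a *: mul x y + mul x z).

Definition linear_map (F : fieldType) (A : lmodType F) (alpha : A -> A) :=
  forall a x y, alpha (a *: x + y) = a *: alpha x + alpha y.

Definition multiplicative (A : Type) (mul : A -> A -> A) (alpha : A -> A) :=
  forall x y, alpha (mul x y) = mul (alpha x) (alpha y).

Definition anticommutative (A : zmodType) (mul : A -> A -> A) :=
  forall x y, mul x y = - mul y x.

Definition homJ (A : zmodType) (mul : A -> A -> A) (alpha : A -> A) x y z :=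
  mul (mul x y) (alpha z) + mul (mul y z) (alpha x) + mul (mul z x) (alpha y).

Definition hom_malcev (F : fieldType) (A : lmodType F)
    (mul : A -> A -> A) (alpha : A -> A) :=
  [/\ bilinear_mul mul, linear_map alpha, multiplicative mul alpha,
      anticommutative mul &
      forall x y z, homJ mul alpha (alpha x) (alpha y) (mul x z)
                    = mul (homJ mul alpha x y z) (alpha (alpha x))].

Definition homG (A : zmodType) (mul : A -> A -> A) (alpha : A -> A) w x y z :=
  homJ mul alpha (mul w x) (alpha y) (alpha z)
  - mul (alpha (alpha x)) (homJ mul alpha w y z)
  - mul (homJ mul alpha x y z) (alpha (alpha w)).

From Pilot Require Import Defs.
From mathcomp Require Import all_boot all_algebra.
Import GRing.Theory.
Local Open Scope ring_scope.

(* Polarizing the Hom-Malcev identity J(αx,αy,xz) = J(x,y,z)α²x in x gives a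
   linearized identity valid in every Hom-Malcev algebra.  In any
   anticommutative multiplicative Hom-algebra the Hom-Jacobian is alternating
   and satisfies a Hom version of Sagle's identity (an alternating sum of the
   J(ab,αc,αd) equals an alternating sum of the J(a,b,c)α²d); with these,
   twice G(w,x,y,z) minus four times the claimed right-hand side is an integer
   combination of four instances of the linearized identity.  In
   characteristic 0 the factor 2 cancels. *)

Inductive zmod_term :=
  | ZVar of nat
  | ZAdd of zmod_term & zmod_term
  | ZOpp of zmod_term
  | ZZero
  | ZMuln of zmod_term & nat.

Section ZmodReflection.

Variables (V : zmodType) (env : seq V).

Fixpoint zeval (t : zmod_term) : V :=
  match t with
  | ZVar n => env`_n
  | ZAdd t1 t2 => zeval t1 + zeval t2
  | ZOpp t1 => - zeval t1
  | ZZero => 0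
  | ZMuln t1 k => zeval t1 *+ k
  end.

Fixpoint zcoef (t : zmod_term) (i : nat) : int :=
  match t with
  | ZVar n => (n == i : nat)%:Z
  | ZAdd t1 t2 => zcoef t1 i + zcoef t2 i
  | ZOpp t1 => - zcoef t1 i
  | ZZero => 0
  | ZMuln t1 k => zcoef t1 i * k%:Z
  end.

Fixpoint zvars_lt (N : nat) (t : zmod_term) : bool :=
  match t with
  | ZVar n => (n < N)%N
  | ZAdd t1 t2 => zvars_lt N t1 && zvars_lt N t2
  | ZOpp t1 | ZMuln t1 _ => zvars_lt N t1
  | ZZero => true
  end.

Lemma zeval_sum N t :
  zvars_lt N t -> zeval t = \sum_(i < N) env`_i *~ zcoef t i.
Proof.
elim: t => [n | t1 IH1 t2 IH2 | t1 IH1 | | t1 IH1 k] /=.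
- move=> ltnN; rewrite (bigD1 (Ordinal ltnN)) //= eqxx big1 ?addr0 // => i.
  by rewrite -val_eqE /= eq_sym => /negbTE ->.
- case/andP=> /IH1 -> /IH2 ->; rewrite -big_split /=.
  by apply: eq_bigr => i _; rewrite mulrzDr.
- by move/IH1 ->; rewrite -sumrN; apply: eq_bigr => i _; rewrite mulrNz.
- by move=> _; rewrite big1 // => i _; rewrite mulr0z.
- move/IH1 ->; rewrite -sumrMnl; apply: eq_bigr => i _.
  by rewrite mulrzA -pmulrn.
Qed.

Lemma zeval_eq N t1 t2 :
  [&& zvars_lt N t1, zvars_lt N t2 &
      all (fun i => zcoef t1 i == zcoef t2 i) (iota 0 N)] ->
  zeval t1 = zeval t2.
Proof.
case/and3P=> lt1 lt2 /allP eq12.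
rewrite (zeval_sum _ _ lt1) (zeval_sum _ _ lt2); apply: eq_bigr => i _.
by rewrite (eqP (eq12 i _)) // mem_iota ltn_ord.
Qed.

End ZmodReflection.

Ltac zlength l :=
  lazymatch l with
  | nil => constr:(0%N)
  | _ :: ?l' => let n := zlength l' in constr:(S n)
  end.

Ltac zindex x l :=
  lazymatch l with
  | x :: _ => constr:(0%N)
  | _ :: ?l' => let n := zindex x l' in constr:(S n)
  end.

(* Returns a pair (term, extended environment); maximal subterms not built
   from [+], [-], [0] and [*+] become variables, compared syntactically. *)
Ltac zreify t env :=
  lazymatch t with
  | ?a + ?b =>
      lazymatch zreify a env with (?ta, ?env1) =>
      lazymatch zreify b env1 with (?tb, ?env2) =>
        constr:((ZAdd ta tb, env2)) end end
  | - ?a =>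
      lazymatch zreify a env with (?ta, ?env1) => constr:((ZOpp ta, env1)) end
  | 0 => constr:((ZZero, env))
  | ?a *+ ?k =>
      lazymatch zreify a env with (?ta, ?env1) => constr:((ZMuln ta k, env1)) end
  | _ =>
      match constr:(0%N) with
      | _ => let n := zindex t env in constr:((ZVar n, env))
      | _ => let n := zlength env in
             let env' := eval cbv [cat] in (env ++ [:: t]) in
             constr:((ZVar n, env'))
      end
  end.

Ltac zmod_identity :=
  lazymatch goal with
  | |- @eq ?V ?lhs ?rhs =>
      lazymatch zreify lhs (@nil V) with (?tl, ?env1) =>
      lazymatch zreify rhs env1 with (?tr, ?env) =>
        let N := zlength env in
        apply: (@zeval_eq V env N tl tr); vm_compute; reflexivity
      end end
  end.

Lemma char0_mulrnI (F : fieldType) (V : lmodType F) n :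
  [pchar F] =i pred0 -> injective (fun v : V => v *+ n.+1).
Proof.
move=> charF0 u v /=; rewrite -!scaler_nat; apply: scalerI.
by rewrite ((pcharf0P F).1 charF0).
Qed.

Section AnticommutativeHomAlgebra.

Variables (F : fieldType) (A : lmodType F) (mul : A -> A -> A) (alpha : A -> A).
Hypotheses (mul_bilinear : bilinear_mul mul) (alpha_linear : linear_map alpha).
Hypothesis mul_anti : anticommutative mul.

Local Notation J := (homJ mul alpha).

Lemma hmulDl x y z : mul (x + y) z = mul x z + mul y z.
Proof. by have := mul_bilinear.1 1 x y z; rewrite !scale1r. Qed.

Lemma hmulDr x y z : mul x (y + z) = mul x y + mul x z.
Proof. by have := mul_bilinear.2 1 x y z; rewrite !scale1r. Qed.

Lemma hmul0l z : mul 0 z = 0.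
Proof. by apply: (addrI (mul 0 z)); rewrite -hmulDl !addr0. Qed.

Lemma hmul0r x : mul x 0 = 0.
Proof. by apply: (addrI (mul x 0)); rewrite -hmulDr !addr0. Qed.

Lemma hmulNl x z : mul (- x) z = - mul x z.
Proof. by apply/eqP; rewrite -addr_eq0 -hmulDl addNr hmul0l. Qed.

Lemma hmulNr x z : mul x (- z) = - mul x z.
Proof. by apply/eqP; rewrite -addr_eq0 -hmulDr addNr hmul0r. Qed.

Lemma alphaD x y : alpha (x + y) = alpha x + alpha y.
Proof. by have := alpha_linear 1 x y; rewrite !scale1r. Qed.

Lemma alphaN x : alpha (- x) = - alpha x.
Proof.
apply/eqP; rewrite -addr_eq0 -alphaD addNr.
by apply/eqP/(addrI (alpha 0)); rewrite -alphaD !addr0.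
Qed.

Lemma homJ_cycle x y z : J x y z = J y z x.
Proof. by rewrite /homJ [RHS]addrC addrA. Qed.

Lemma homJ_swap x y z : J y x z = - J x y z.
Proof.
rewrite /homJ (mul_anti y x) (mul_anti x z) (mul_anti z y) !hmulNl.
zmod_identity.
Qed.

Lemma homJ_swap23 x y z : J x z y = - J x y z.
Proof. by rewrite -homJ_cycle homJ_swap homJ_cycle. Qed.

Lemma homJDl x x' y z : J (x + x') y z = J x y z + J x' y z.
Proof. rewrite /homJ alphaD !(hmulDl, hmulDr); zmod_identity. Qed.

Lemma homJDr x y z z' : J x y (z + z') = J x y z + J x y z'.
Proof. rewrite /homJ alphaD !(hmulDl, hmulDr); zmod_identity. Qed.

Lemma homJNl x y z : J (- x) y z = - J x y z.
Proof. rewrite /homJ alphaN !(hmulNl, hmulNr); zmod_identity. Qed.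

(* Qualified: [GRing.multiplicative] shadows the notion of Defs. *)
Hypothesis alpha_mul : Defs.multiplicative mul alpha.

Lemma hom_sagle_identity w x y z :
  J (mul y z) (alpha w) (alpha x) - J (mul x z) (alpha w) (alpha y)
  + J (mul x y) (alpha w) (alpha z) + J (mul w z) (alpha x) (alpha y)
  - J (mul w y) (alpha x) (alpha z) + J (mul w x) (alpha y) (alpha z)
  = mul (J w x y) (alpha (alpha z)) - mul (J w x z) (alpha (alpha y))
    + mul (J w y z) (alpha (alpha x)) - mul (J x y z) (alpha (alpha w)).
Proof.
rewrite /homJ !alpha_mul !hmulDl !(mul_anti (alpha _) (mul _ _)).
rewrite (mul_anti y w) (mul_anti z w) (mul_anti z x).
rewrite (mul_anti (mul (alpha y) (alpha z))).
rewrite (mul_anti (mul (alpha x) (alpha z)) (mul (alpha w) (alpha y))).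
rewrite (mul_anti (mul (alpha x) (alpha y)) (mul (alpha w) (alpha z))).
rewrite !hmulNl; zmod_identity.
Qed.

Definition malcev_polar u v c d :=
  J (alpha u) (alpha c) (mul v d) + J (alpha v) (alpha c) (mul u d)
  - mul (J u c d) (alpha (alpha v)) - mul (J v c d) (alpha (alpha u)).

Lemma homG_double w x y z :
  homG mul alpha w x y z *+ 2 =
    (J (mul w x) (alpha y) (alpha z) + J (mul y z) (alpha w) (alpha x)) *+ 4
    - (malcev_polar w x y z + malcev_polar w y x z *+ 2
       + malcev_polar w y z x - malcev_polar w z x y).
Proof.
(* Write every Hom-Jacobian as J(cd,αa,αb) or J(a,b,c)α²d with the variables
   in the order w, x, y, z; the identity then holds modulo Sagle's. *)
rewrite /homG /malcev_polar -!(homJ_cycle (mul _ _)).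
rewrite (mul_anti (alpha (alpha x))) (mul_anti y x) (mul_anti z y) !homJNl.
rewrite (homJ_swap23 (mul w z) (alpha x)) (homJ_swap23 (mul w y) (alpha x)).
rewrite (homJ_swap x y z) (homJ_swap23 w x z) -(homJ_cycle x y z).
rewrite (homJ_cycle z x y) !hmulNl.
have /eqP := hom_sagle_identity w x y z; rewrite -subr_eq0 => /eqP sagle0.
by rewrite -[RHS]subr0 -sagle0; zmod_identity.
Qed.

Hypothesis hom_malcev : forall x y z,
  J (alpha x) (alpha y) (mul x z) = mul (J x y z) (alpha (alpha x)).

Lemma malcev_polar0 u v c d : malcev_polar u v c d = 0.
Proof.
have := hom_malcev (u + v) c d.
rewrite !alphaD (hmulDl u v d) !homJDl !homJDr (hmulDl (J u c d)) !hmulDr.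
rewrite !hom_malcev.
move/eqP; rewrite -subr_eq0 => /eqP <-; rewrite /malcev_polar; zmod_identity.
Qed.

End AnticommutativeHomAlgebra.

Theorem lemma2p7 (F : fieldType) (A : lmodType F)
    (mul : A -> A -> A) (alpha : A -> A) :
  [pchar F] =i pred0 ->
  hom_malcev mul alpha ->
  forall w x y z : A,
    homG mul alpha w x y z =
    2%:R *: (homJ mul alpha (mul w x) (alpha y) (alpha z)
             + homJ mul alpha (mul y z) (alpha w) (alpha x)).
Proof.
move=> charF0 [bilin lin mult anti malcev] w x y z.
apply: (@char0_mulrnI F A 1 charF0) => /=.
rewrite (@homG_double _ _ _ _ bilin lin anti mult).
rewrite !(@malcev_polar0 _ _ _ _ bilin lin malcev).
by rewrite !(subr0, addr0, mul0rn) scaler_nat -mulrnA.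
Qed.
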